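(* For every complex number $s$ with $\operatorname{Re}(s)>2$, $$\sum_{n\ge1}\frac{\tau(n)\delta(n)}{n^s}=2\,\zeta(s-1)^2\,F(s-1).$$
   Context: The arithmetic derivative $\delta$ is defined by $\delta(p)=1$ for every prime $p$ and $\delta(mn)=m\delta(n)+n\delta(m)$ for all positive integers $m,n$; equivalently $\delta(1)=0$ and $\delta(n)=n\sum_{p^\alpha\| n}\alpha/p$. $\tau(n)$ is the number of positive divisors of $n$, $\zeta$ is the Riemann zeta function and $F(s)=\sum_{p\text{ prime}}\frac{1}{p^{s+1}-p}$. *)

From Stdlib Require Import Reals.
From Coquelicot Require Import Coquelicot.
From mathcomp Require Import ssreflect ssrbool ssrnat div seq prime.

Open Scope R_scope.

Definition tau (n : nat) : nat := size (divisors n).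

(* arithmetic derivative: delta(n) = n * sum_{p^a || n} a/p  (delta(1)=0) *)
Definition adelta (n : nat) : R :=
  INR n * foldr (fun p acc => INR (logn p n) / INR p + acc) 0 (primes n).

Definition cexp (z : C) : C :=
  (exp (Re z) * cos (Im z), exp (Re z) * sin (Im z)).

Definition npow (n : nat) (z : C) : C := cexp (Cmult z (RtoC (ln (INR n)))).

Definition is_zeta (w : C) (Z : C) : Prop :=
  is_series (fun n : nat => Cinv (npow n.+1 w)) Z.

Definition F_term (w : C) (n : nat) : C :=
  if prime n then Cinv (Cminus (npow n (Cplus w (RtoC 1))) (RtoC (INR n)))
  else RtoC 0.

Definition is_F (w : C) (Fv : C) : Prop := is_series (F_term w) Fv.

(* Put [w = s - 1], so [Re w > 1], and [L(n) = delta(n)/n = sum_(p^a || n) a/p].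
   Then [tau(n) delta(n) / n^s = tau(n) L(n) n^-w], and two arithmetic
   identities turn the series into a product of known Dirichlet series:
   - [L = Lambda * 1], where [Lambda(p^k) = 1/p] for [k >= 1], [0] elsewhere;
   - [tau L = 2 (L * 1)], since [L(ab) = L(a) + L(b)] and [tau = 1 * 1].
   Expanding [1/(p^(w+1) - p) = (1/p) sum_(k>=1) p^-kw] shows that the
   Dirichlet series of [Lambda] is [F(w)]; hence the series equals
   [2 F(w) zeta(w)^2].

   Every rearrangement is an instance of one Fubini statement for absolutely
   convergent double series summed along the fibres of a key map
   [(i, j) |-> n] ([fiber_sum]); Dirichlet convolution is the fibre sum for
   the key [(i, j) |-> ij]. *)

From Stdlib Require Import Reals Lra Lia.
From Coquelicot Require Import Coquelicot.
From mathcomp Require Import ssreflect ssrbool ssrnat eqtype seq div prime zify.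

Local Open Scope R_scope.

Lemma sum_n_ext_zero {G : AbelianMonoid} (h : nat -> G) n N :
  (n <= N)%nat -> (forall k, (n < k)%nat -> (k <= N)%nat -> h k = zero) ->
  sum_n h N = sum_n h n.
Proof.
elim: N => [|N IH] hle hz.
  by have -> : n = 0%nat by apply/eqP; rewrite -leqn0.
case: (ltnP n N.+1) => hlt.
  rewrite sum_Sn IH ?hz ?plus_zero_r // => k h1 h2.
  by apply: hz => //; apply: leqW.
by have -> : n = N.+1 by apply/eqP; rewrite eqn_leq hle hlt.
Qed.

Lemma sum_n_zero {G : AbelianMonoid} (h : nat -> G) N :
  (forall k, (k <= N)%nat -> h k = zero) -> sum_n h N = zero.
Proof.
elim: N => [|N IH] hz; first by rewrite sum_O hz.
by rewrite sum_Sn IH ?hz ?plus_zero_r // => k hk; apply: hz; apply: leqW.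
Qed.

Lemma sum_delta {G : AbelianMonoid} (x : G) (t N : nat) :
  sum_n (fun n => if t == n then x else zero) N = if (t <= N)%nat then x else zero.
Proof.
elim: N => [|N IH]; first by rewrite sum_O; case: t.
rewrite sum_Sn IH; case: (ltngtP t N.+1) => h.
- by rewrite ltnS in h; rewrite h plus_zero_r.
- by rewrite (_ : (t <= N)%N = false) ?plus_zero_r // leqNgt ltnW.
- by rewrite h ltnn plus_zero_l.
Qed.

Lemma sum_delta_at {G : AbelianMonoid} (g : nat -> G) (t N : nat) :
  sum_n (fun n => if n == t then g n else zero) N = if (t <= N)%nat then g t else zero.
Proof.
rewrite -(sum_delta (g t)); apply: sum_n_ext => n.
by case: eqP => [->|]; rewrite ?eqxx //; case: eqP => // ->.
Qed.

Lemma sum_n_shift {G : AbelianMonoid} (h : nat -> G) N :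
  sum_n h N.+1 = plus (h 0%nat) (sum_n (fun k => h k.+1) N).
Proof. by rewrite /sum_n sum_Sn_m ?sum_n_m_S //; apply/leP. Qed.

Lemma sum_n_morph {G H : AbelianMonoid} (g : G -> H) (a : nat -> G) N :
  g zero = zero -> (forall x y, g (plus x y) = plus (g x) (g y)) ->
  g (sum_n a N) = sum_n (fun n => g (a n)) N.
Proof.
move=> g0 gD; elim: N => [|N IH]; first by rewrite !sum_O.
by rewrite !sum_Sn gD IH.
Qed.

Lemma sumR_nonneg (h : nat -> R) N : (forall k, 0 <= h k) -> 0 <= sum_n h N.
Proof.
move=> H; elim: N => [|N IH]; first by rewrite sum_O.
by rewrite sum_Sn /plus /=; have := H N.+1; lra.
Qed.

Lemma sumR_mono (h : nat -> R) n N :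
  (forall k, 0 <= h k) -> (n <= N)%nat -> sum_n h n <= sum_n h N.
Proof.
move=> H; elim: N => [|N IH] hn.
  have -> : n = 0%nat by apply/eqP; rewrite -leqn0.
  exact: Rle_refl.
case: (ltnP n N.+1) => hlt.
  by rewrite sum_Sn /plus /=; have := H N.+1; have := IH hlt; lra.
have -> : n = N.+1 by apply/eqP; rewrite eqn_leq hn hlt.
exact: Rle_refl.
Qed.

(* Dirichlet convolution is the fibre sum for the
   multiplicative key [(i+1)(j+1) - 1]; the double series defining [F] is
   reorganised by the key [(p+1)^(k+1) - 1]. *)
Section FiberSums.
Variable key : nat -> nat -> nat.

(* Only pairs with [i, j <= n] are summed: this is exact for families that
   vanish unless both indices are bounded by the key. *)
Definition fiber_sum {G : AbelianMonoid} (f : nat -> nat -> G) (n : nat) : G :=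
  sum_n (fun i => sum_n (fun j => if key i j == n then f i j else zero) n) n.

Definition key_bounded {G : AbelianMonoid} (f : nat -> nat -> G) : Prop :=
  forall i j, (key i j < i)%nat \/ (key i j < j)%nat -> f i j = zero.

Lemma key_bounded_map {G H : AbelianMonoid} (g : G -> H) (f : nat -> nat -> G) :
  g zero = zero -> key_bounded f -> key_bounded (fun i j => g (f i j)).
Proof. by move=> g0 hf i j hij; rewrite hf. Qed.

Lemma fiber_sum_widen {G : AbelianMonoid} (f : nat -> nat -> G) n N :
  key_bounded f -> (n <= N)%nat ->
  fiber_sum f n = sum_n (fun i => sum_n (fun j => if key i j == n then f i j else zero) N) N.
Proof.
move=> hk hn; rewrite /fiber_sum (sum_n_ext_zero _ n N) //.
  apply: sum_n_ext_loc => i hi; symmetry; apply: sum_n_ext_zero => // j hj _.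
  by case: eqP => // he; apply: hk; right; rewrite he.
move=> i hi _; apply: sum_n_zero => j _.
by case: eqP => // he; apply: hk; left; rewrite he.
Qed.

Lemma fiber_partial_sum {G : AbelianMonoid} (f : nat -> nat -> G) N :
  key_bounded f ->
  sum_n (fiber_sum f) N =
  sum_n (fun i => sum_n (fun j => if (key i j <= N)%nat then f i j else zero) N) N.
Proof.
move=> hk.
rewrite (sum_n_ext_loc _ (fun n => sum_n (fun i => sum_n
  (fun j => if key i j == n then f i j else zero) N) N)); last first.
  by move=> n /leP hn; apply: fiber_sum_widen.
rewrite sum_n_switch; apply: sum_n_ext => i.
rewrite sum_n_switch; apply: sum_n_ext => j.
by rewrite -sum_delta.
Qed.

Lemma fiber_sum_ext {G : AbelianMonoid} (f g : nat -> nat -> G) n :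
  (forall i j, key i j = n -> f i j = g i j) -> fiber_sum f n = fiber_sum g n.
Proof.
move=> H; apply: sum_n_ext => i; apply: sum_n_ext => j.
by case: eqP => // h; rewrite H.
Qed.

Lemma fiber_sum_morph {G H : AbelianMonoid} (g : G -> H) (f : nat -> nat -> G) n :
  g zero = zero -> (forall x y, g (plus x y) = plus (g x) (g y)) ->
  g (fiber_sum f n) = fiber_sum (fun i j => g (f i j)) n.
Proof.
move=> g0 gD; rewrite /fiber_sum sum_n_morph //; apply: sum_n_ext => i.
by rewrite sum_n_morph //; apply: sum_n_ext => j; case: ifP.
Qed.

Lemma fiber_sum_plus {G : AbelianMonoid} (f g : nat -> nat -> G) n :
  fiber_sum (fun i j => plus (f i j) (g i j)) n = plus (fiber_sum f n) (fiber_sum g n).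
Proof.
rewrite /fiber_sum -sum_n_plus; apply: sum_n_ext => i.
rewrite -sum_n_plus; apply: sum_n_ext => j.
by case: ifP => _ //; rewrite plus_zero_r.
Qed.

Lemma fiber_sum_nonneg (f : nat -> nat -> R) n :
  (forall i j, 0 <= f i j) -> 0 <= fiber_sum f n.
Proof.
move=> hf; apply: sumR_nonneg => i; apply: sumR_nonneg => j.
by case: ifP => _; [exact: hf | exact: Rle_refl].
Qed.

Lemma Cmod_sum (a : nat -> C) N : Cmod (sum_n a N) <= sum_n (fun n => Cmod (a n)) N.
Proof.
elim: N => [|N IH]; first by rewrite !sum_O; lra.
rewrite !sum_Sn; apply: Rle_trans (Cmod_triangle _ _) _.
by rewrite /plus /=; lra.
Qed.

Lemma Cmod_fiber_sum (f : nat -> nat -> C) n :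
  Cmod (fiber_sum f n) <= fiber_sum (fun i j => Cmod (f i j)) n.
Proof.
apply: Rle_trans (Cmod_sum _ _) _; apply: sum_n_m_le => i.
apply: Rle_trans (Cmod_sum _ _) _; apply: sum_n_m_le => j.
by case: ifP => _; rewrite ?Cmod_0; apply: Rle_refl.
Qed.

Lemma key_bound K M :
  exists N0, forall i j, (i <= K)%nat -> (j <= M)%nat -> (key i j <= N0)%nat.
Proof.
have row : forall i, exists Ni, forall j, (j <= M)%nat -> (key i j <= Ni)%nat.
  move=> i; elim: M => [|M [Ni Hi]].
    by exists (key i 0%nat) => j; rewrite leqn0 => /eqP ->.
  exists (maxn Ni (key i M.+1)) => j; rewrite leq_eqVlt ltnS => /orP [/eqP ->|hj].
    exact: leq_maxr.
  by apply: leq_trans (leq_maxl _ _); apply: Hi.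
elim: K => [|K [N1 HK]].
  have [N0 H0] := row 0%nat.
  by exists N0 => i j; rewrite leqn0 => /eqP ->; apply: H0.
have [N2 H2] := row K.+1.
exists (maxn N1 N2) => i j; rewrite leq_eqVlt ltnS => /orP [/eqP ->|hi] hj.
  by apply: leq_trans (leq_maxr _ _); apply: H2.
by apply: leq_trans (leq_maxl _ _); apply: HK.
Qed.

Lemma is_lim_seq_sum_n (u : nat -> nat -> R) (l : nat -> R) K :
  (forall i, is_lim_seq (u i) (l i)) ->
  is_lim_seq (fun M => sum_n (fun i => u i M) K) (sum_n l K).
Proof.
move=> H; elim: K => [|K IH].
  by rewrite sum_O; apply: is_lim_seq_ext (H 0%nat) => M; rewrite sum_O.
rewrite sum_Sn; apply: (is_lim_seq_ext (fun M => sum_n (fun i => u i M) K + u K.+1 M)).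
  by move=> M; rewrite sum_Sn.
exact: is_lim_seq_plus'.
Qed.

(* Fubini for nonnegative double series: if every row of a nonnegative
   family sums to [r i] and the row sums sum to [S], then so do the fibre
   sums.  Their partial sums increase, are bounded by [S], and dominate
   every finite box, whence their limit is [S]. *)
Section NonnegFubini.
Variables (f : nat -> nat -> R) (r : nat -> R) (S : R).
Hypothesis f_bounded : key_bounded f.
Hypothesis f_nonneg : forall i j, 0 <= f i j.
Hypothesis f_rows : forall i, is_series (f i) (r i).
Hypothesis r_series : is_series r S.

Lemma fiber_partial_sum_incr N : sum_n (fiber_sum f) N <= sum_n (fiber_sum f) N.+1.
Proof. by rewrite sum_Sn /plus /=; have := fiber_sum_nonneg f N.+1 f_nonneg; lra. Qed.

Lemma fiber_partial_sum_le N : sum_n (fiber_sum f) N <= S.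
Proof.
rewrite fiber_partial_sum //.
apply: Rle_trans (is_lim_seq_incr_compare _ _ r_series _ N); last first.
  move=> n; rewrite sum_Sn /plus /=.
  suff : 0 <= r n.+1 by lra.
  apply: (is_lim_seq_le (fun _ => 0) (sum_n (f n.+1)) 0 (r n.+1)) (f_rows n.+1).
  - by move=> m; apply: sumR_nonneg.
  - exact: is_lim_seq_const.
apply: sum_n_m_le => i; apply: Rle_trans (is_lim_seq_incr_compare _ _ (f_rows i) _ N); last first.
  by move=> n; rewrite sum_Sn /plus /=; have := f_nonneg i n.+1; lra.
by apply: sum_n_m_le => j; case: ifP => _; [exact: Rle_refl | exact: f_nonneg].
Qed.

Lemma box_le_fiber_partial_sum K M :
  exists N, sum_n (fun i => sum_n (f i) M) K <= sum_n (fiber_sum f) N.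
Proof.
have [N0 HN0] := key_bound K M; set N := (N0 + K + M)%nat; exists N.
set g := fun i j => if (key i j <= N)%nat then f i j else zero.
have g_nonneg : forall i j, 0 <= g i j.
  by move=> i j; rewrite /g; case: ifP => _; [exact: f_nonneg | exact: Rle_refl].
have -> : sum_n (fun i => sum_n (f i) M) K = sum_n (fun i => sum_n (g i) M) K.
  apply: sum_n_ext_loc => i /leP hi; apply: sum_n_ext_loc => j /leP hj.
  by rewrite /g (_ : (key i j <= N)%nat = true) //; have := HN0 i j hi hj; rewrite /N; lia.
rewrite fiber_partial_sum //.
apply: (Rle_trans _ (sum_n (fun i => sum_n (g i) M) N)).
  by apply: sumR_mono; [move=> i; apply: sumR_nonneg | rewrite /N; lia].
by apply: sum_n_m_le => i; apply: sumR_mono => //; rewrite /N; lia.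
Qed.

Lemma fiber_series_nonneg : is_series (fiber_sum f) S.
Proof.
have [l hl] := ex_finite_lim_seq_incr _ S fiber_partial_sum_incr fiber_partial_sum_le.
have box_le_l : forall K M, sum_n (fun i => sum_n (f i) M) K <= l.
  move=> K M; have [N hN] := box_le_fiber_partial_sum K M.
  exact: Rle_trans hN (is_lim_seq_incr_compare _ _ hl fiber_partial_sum_incr N).
have S_le_l : S <= l.
  apply: (is_lim_seq_le (sum_n r) (fun _ => l) S l) r_series (is_lim_seq_const l) => K.
  apply: (is_lim_seq_le _ (fun _ => l) _ l _
    (is_lim_seq_sum_n (fun i M => sum_n (f i) M) r K f_rows) (is_lim_seq_const l)).
  by move=> M; apply: box_le_l.
have l_le_S : l <= S.
  exact: (is_lim_seq_le _ (fun _ => S) l S fiber_partial_sum_le hl (is_lim_seq_const S)).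
by have -> : S = l by lra.
Qed.

End NonnegFubini.

End FiberSums.

Lemma is_series_zero {K : AbsRing} {V : NormedModule K} :
  is_series (fun _ : nat => @zero V) zero.
Proof.
apply: (filterlim_ext (fun _ => zero)); last exact: filterlim_const.
by move=> n; rewrite sum_n_zero.
Qed.

Lemma Series_nonneg (a : nat -> R) : (forall n, 0 <= a n) -> ex_series a -> 0 <= Series a.
Proof.
move=> H [l hl]; rewrite (is_series_unique _ _ hl).
apply: (is_lim_seq_le (fun _ => 0) (sum_n a) 0 l) hl; last exact: is_lim_seq_const.
by move=> n; apply: sumR_nonneg.
Qed.

Definition double_summable (h : nat -> nat -> R) : Prop :=
  (forall i, ex_series (h i)) /\ ex_series (fun i => Series (h i)).

Lemma double_summable_le (g h : nat -> nat -> R) :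
  (forall i j, 0 <= g i j <= h i j) -> double_summable h -> double_summable g.
Proof.
move=> hgh [hr hS].
have hr' : forall i, ex_series (g i).
  move=> i; apply: ex_series_le (hr i) => j.
  by have [h1 h2] := hgh i j; rewrite /norm /= /abs /= Rabs_pos_eq.
split=> //; apply: ex_series_le hS => i.
rewrite /norm /= /abs /= Rabs_pos_eq.
  by apply: Series_le (hr i) => j; apply: hgh.
by apply: Series_nonneg (hr' i) => j; have := hgh i j; lra.
Qed.

Section DoubleSeries.
Variable key : nat -> nat -> nat.

Lemma fiber_series_double_summable (f : nat -> nat -> R) :
  key_bounded key f -> (forall i j, 0 <= f i j) -> double_summable f ->
  is_series (fiber_sum key f) (Series (fun i => Series (f i))).
Proof.
move=> hk hpos [hr hS].
by apply: (fiber_series_nonneg key f (fun i => Series (f i))) => // i; apply: Series_correct.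
Qed.

Definition pos_part (x : R) : R := Rmax x 0.
Definition neg_part (x : R) : R := Rmax (- x) 0.

Lemma pos_part_bounds x : 0 <= pos_part x <= Rabs x.
Proof. rewrite /pos_part /Rmax /Rabs; case: Rle_dec; case: Rcase_abs; lra. Qed.

Lemma neg_part_bounds x : 0 <= neg_part x <= Rabs x.
Proof. rewrite /neg_part /Rmax /Rabs; case: Rle_dec; case: Rcase_abs; lra. Qed.

Lemma pos_neg_part x : x = pos_part x - neg_part x.
Proof. rewrite /neg_part /pos_part /Rmax; case: Rle_dec; case: Rle_dec; lra. Qed.

Lemma fiber_sum_minus (a b : nat -> nat -> R) n :
  fiber_sum key (fun i j => a i j - b i j) n = fiber_sum key a n - fiber_sum key b n.
Proof.
rewrite -[RHS]/(plus (fiber_sum key a n) (opp (fiber_sum key b n))).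
rewrite (fiber_sum_morph key opp) ?opp_zero -?fiber_sum_plus //; last exact: opp_plus.
Qed.

(* Fubini for absolutely convergent real double series, by splitting the
   family into its positive and negative parts. *)
Lemma fiber_series_real (u : nat -> nat -> R) :
  key_bounded key u -> double_summable (fun i j => Rabs (u i j)) ->
  is_series (fiber_sum key u) (Series (fun i => Series (u i))).
Proof.
move=> hk habs.
have part_series : forall p : R -> R, (forall x, 0 <= p x <= Rabs x) -> p 0 = 0 ->
    double_summable (fun i j => p (u i j)) /\
    is_series (fiber_sum key (fun i j => p (u i j))) (Series (fun i => Series (fun j => p (u i j)))).
  move=> p hp p0.
  have hsum : double_summable (fun i j => p (u i j)) by apply: double_summable_le habs.
  split=> //; apply: fiber_series_double_summable => //.
  - by apply: key_bounded_map.
  - by move=> i j; have := hp (u i j); lra.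
have [[hrP hSP] hP] := part_series pos_part pos_part_bounds ltac:(rewrite /pos_part Rmax_right; lra).
have [[hrN hSN] hN] := part_series neg_part neg_part_bounds ltac:(rewrite /neg_part Rmax_right; lra).
have -> : Series (fun i => Series (u i)) =
    Series (fun i => Series (fun j => pos_part (u i j))) - Series (fun i => Series (fun j => neg_part (u i j))).
  rewrite -Series_minus //; apply: Series_ext => i.
  by rewrite -Series_minus //; apply: Series_ext => j; apply: pos_neg_part.
apply: (is_series_ext _ _ _ _ (is_series_minus _ _ _ _ hP hN)) => n.
rewrite -[plus _ _]/(fiber_sum key (fun i j => pos_part (u i j)) n
                     - fiber_sum key (fun i j => neg_part (u i j)) n).
by rewrite -fiber_sum_minus; apply: fiber_sum_ext => i j _; rewrite -pos_neg_part.
Qed.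

(* Complex double series are handled through real and imaginary parts,
   both instances of an additive functional [C -> R] bounded by the modulus. *)
Definition real_functional (q : C -> R) : Prop :=
  [/\ forall a b, q (a + b)%C = q a + q b, forall a, q (- a)%C = - q a
    & forall z, Rabs (q z) <= Cmod z].

Lemma im_le_Cmod (c : C) : Rabs (Im c) <= Cmod c.
Proof. by apply: Rle_trans (Rmax_Cmod c); apply: Rmax_r. Qed.

Lemma Re_functional : real_functional Re.
Proof. by split=> //; exact: re_le_Cmod. Qed.

Lemma Im_functional : real_functional Im.
Proof. by split=> //; exact: im_le_Cmod. Qed.

Section RealFunctional.
Variable q : C -> R.
Hypothesis hq : real_functional q.

Lemma q_add a b : q (a + b)%C = q a + q b. Proof. by case: hq. Qed.
Lemma q_opp a : q (- a)%C = - q a. Proof. by case: hq. Qed.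
Lemma q_le_Cmod z : Rabs (q z) <= Cmod z. Proof. by case: hq. Qed.

Lemma q_zero : q 0%C = 0.
Proof. by have := q_add 0%C 0%C; rewrite Cplus_0_l; lra. Qed.

Lemma q_sum (a : nat -> C) N : q (sum_n a N) = sum_n (fun n => q (a n)) N.
Proof. by apply: sum_n_morph; [exact: q_zero | exact: q_add]. Qed.

Lemma is_series_proj (a : nat -> C) l :
  is_series a l -> is_series (fun n => q (a n)) (q l).
Proof.
move/filterlim_locally_ball_norm => H.
apply/filterlim_locally_ball_norm => eps.
apply: filter_imp (H eps) => n; rewrite /ball_norm -q_sum => h.
apply: Rle_lt_trans h; have := q_le_Cmod (minus (sum_n a n) l).
by rewrite /minus /plus /opp /= q_add q_opp.
Qed.

Lemma proj_double_summable (f : nat -> nat -> C) :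
  double_summable (fun i j => Cmod (f i j)) ->
  double_summable (fun i j => Rabs (q (f i j))).
Proof.
by apply: double_summable_le => i j; split; [exact: Rabs_pos | exact: q_le_Cmod].
Qed.

Lemma proj_row_sums (f : nat -> nat -> C) (s : nat -> C) :
  double_summable (fun i j => Cmod (f i j)) -> (forall i, is_series (f i) (s i)) ->
  is_series (fun i => q (s i)) (Series (fun i => Series (fun j => q (f i j)))).
Proof.
move=> habs hs; have [hr hS] := proj_double_summable f habs.
have row : forall i, Series (fun j => q (f i j)) = q (s i).
  by move=> i; apply: is_series_unique; apply: is_series_proj.
rewrite (Series_ext _ _ row); apply: Series_correct.
apply: ex_series_le hS => i; rewrite -row.
exact: Series_Rabs (hr i).
Qed.

Lemma fiber_series_proj (f : nat -> nat -> C) :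
  key_bounded key f -> double_summable (fun i j => Cmod (f i j)) ->
  is_series (fun n => q (fiber_sum key f n)) (Series (fun i => Series (fun j => q (f i j)))).
Proof.
move=> hk habs.
apply: (is_series_ext (fiber_sum key (fun i j => q (f i j)))).
  by move=> n; rewrite (fiber_sum_morph key q _ _ q_zero q_add).
apply: fiber_series_real; last exact: proj_double_summable.
by apply: key_bounded_map hk; exact q_zero.
Qed.

End RealFunctional.

Lemma Cmod_le_Re_Im (z : C) : Cmod z <= Rabs (Re z) + Rabs (Im z).
Proof.
case: z => x y; rewrite /Cmod /=.
have hx := Rabs_pos x; have hy := Rabs_pos y.
rewrite -(sqrt_pow2 (Rabs x + Rabs y)); last lra.
have ex : x * x = Rabs x * Rabs x by rewrite -Rabs_mult Rabs_pos_eq //; nra.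
have ey : y * y = Rabs y * Rabs y by rewrite -Rabs_mult Rabs_pos_eq //; nra.
by apply: sqrt_le_1_alt; nra.
Qed.

Lemma is_series_Re_Im (a : nat -> C) l :
  is_series (fun n => Re (a n)) (Re l) -> is_series (fun n => Im (a n)) (Im l) ->
  is_series a l.
Proof.
move/filterlim_locally_ball_norm => H1 /filterlim_locally_ball_norm H2.
apply/filterlim_locally_ball_norm => eps.
have e2 : 0 < eps / 2 by have := cond_pos eps; lra.
apply: filter_imp (filter_and _ _ (H1 (mkposreal _ e2)) (H2 (mkposreal _ e2))) => n [].
rewrite /ball_norm -(q_sum _ Re_functional) -(q_sum _ Im_functional) => h1 h2.
apply: Rle_lt_trans (Cmod_le_Re_Im (minus (sum_n a n) l)) _.
set x := minus (Re (sum_n a n)) (Re l) in h1 *.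
set y := minus (Im (sum_n a n)) (Im l) in h2 *.
change (Rabs x < eps / 2) in h1; change (Rabs y < eps / 2) in h2.
change (Rabs x + Rabs y < eps); lra.
Qed.

Lemma fiber_series_complex (f : nat -> nat -> C) (s : nat -> C) :
  key_bounded key f -> double_summable (fun i j => Cmod (f i j)) ->
  (forall i, is_series (f i) (s i)) ->
  exists S, is_series s S /\ is_series (fiber_sum key f) S.
Proof.
move=> hk habs hs.
pose S : C := (Series (fun i => Series (fun j => Re (f i j))),
               Series (fun i => Series (fun j => Im (f i j)))).
exists S; split; apply: is_series_Re_Im.
- exact: (proj_row_sums _ Re_functional) habs hs.
- exact: (proj_row_sums _ Im_functional) habs hs.
- exact: (fiber_series_proj _ Re_functional) hk habs.
- exact: (fiber_series_proj _ Im_functional) hk habs.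
Qed.

Lemma fiber_series_abs (f : nat -> nat -> C) :
  key_bounded key f -> double_summable (fun i j => Cmod (f i j)) ->
  ex_series (fun n => Cmod (fiber_sum key f n)).
Proof.
move=> hk habs.
have hg := fiber_series_double_summable (fun i j => Cmod (f i j)).
apply: ex_series_le (ex_intro _ _ (hg _ _ habs)); last first.
- by move=> i j; apply: Cmod_ge_0.
- by apply: key_bounded_map => //; rewrite /zero /= Cmod_0.
move=> n; rewrite /norm /= /abs /= Rabs_pos_eq; [exact: Cmod_fiber_sum | exact: Cmod_ge_0].
Qed.

End DoubleSeries.

Lemma cexp_add a b : cexp (a + b)%C = (cexp a * cexp b)%C.
Proof.
case: a => x y; case: b => u v; rewrite /cexp /= exp_plus cos_plus sin_plus.
by apply: injective_projections => /=; ring.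
Qed.

Lemma Cmod_cexp z : Cmod (cexp z) = exp (Re z).
Proof.
case: z => x y; rewrite /Cmod /cexp /=.
have e := sin2_cos2 y; rewrite /Rsqr in e.
rewrite (_ : _ + _ = exp x ^ 2); last by nra.
by apply: sqrt_pow2; have := exp_pos x; lra.
Qed.

Lemma npow_add n z1 z2 : npow n (z1 + z2)%C = (npow n z1 * npow n z2)%C.
Proof.
rewrite /npow -cexp_add; f_equal.
by case: z1 z2 => [? ?] [? ?]; apply: injective_projections => /=; ring.
Qed.

Lemma INR_pos n : (0 < n)%nat -> 0 < INR n.
Proof. by move=> h; apply: lt_0_INR; apply/ltP. Qed.

Lemma npow_mul m n z : (0 < m)%nat -> (0 < n)%nat ->
  npow (m * n) z = (npow m z * npow n z)%C.
Proof.
move=> hm hn; rewrite /npow -cexp_add mult_INR ln_mult; try exact: INR_pos.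
by f_equal; case: z => ? ?; apply: injective_projections => /=; ring.
Qed.

Lemma cexp_0 : cexp 0 = 1%C.
Proof.
rewrite /cexp /= exp_0 cos_0 sin_0.
by apply: injective_projections => /=; ring.
Qed.

Lemma npow_0 n : npow n 0 = 1%C.
Proof. by rewrite /npow Cmult_0_l cexp_0. Qed.

Lemma npow_1 n : (0 < n)%nat -> npow n 1 = RtoC (INR n).
Proof.
move=> hn; rewrite /npow Cmult_1_l /cexp /= exp_ln ?cos_0 ?sin_0; last exact: INR_pos.
by apply: injective_projections => /=; ring.
Qed.

Lemma Cmod_npow n z : Cmod (npow n z) = exp (Re z * ln (INR n)).
Proof. by rewrite /npow Cmod_cexp; f_equal; case: z => ? ? /=; ring. Qed.

Lemma npow_neq0 n z : npow n z <> 0%C.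
Proof.
move=> h; have := Cmod_npow n z; rewrite h Cmod_0.
by have := exp_pos (Re z * ln (INR n)); lra.
Qed.

Lemma npow_inv n z : Cinv (npow n z) = npow n (- z)%C.
Proof.
have h : (npow n z * npow n (- z))%C = 1%C.
  by rewrite -npow_add (_ : (z + - z)%C = 0%C) ?npow_0 //; ring.
rewrite -(Cmult_1_r (Cinv _)) -h Cmult_assoc Cinv_l ?Cmult_1_l //.
exact: npow_neq0.
Qed.

Lemma npow_pow p k z : (0 < p)%nat -> npow (p ^ k) z = pow_n (npow p z) k.
Proof.
move=> hp; elim: k => [|k IH].
  by rewrite expn0 /npow (_ : INR 1 = 1) // ln_1 Cmult_0_r cexp_0.
by rewrite expnS npow_mul ?IH // expn_gt0 hp.
Qed.

(* Convergence of [sum n^-sigma] for [sigma > 1]: a telescoping comparison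
   [m^-(1+t) <= ((m-1)^-t - m^-t) / t] bounds the partial sums. *)
Lemma ln_le_sub1 y : 0 < y -> ln y <= y - 1.
Proof.
by move=> hy; have := exp_ineq1_le (ln y); rewrite exp_ln //; lra.
Qed.

Lemma p_series_term_bound (t m : R) : 0 < t -> 1 < m ->
  exp (- (1 + t) * ln m) <= (exp (- t * ln (m - 1)) - exp (- t * ln m)) / t.
Proof.
move=> ht hm; set L := ln m; set L' := ln (m - 1).
have hLL : L - L' >= 1 / m.
  have h1 : ln ((m - 1) / m) <= (m - 1) / m - 1.
    by apply: ln_le_sub1; apply: Rdiv_lt_0_compat; lra.
  rewrite /Rdiv ln_mult ?ln_Rinv in h1; try lra; last by apply: Rinv_0_lt_compat; lra.
  have e : (m - 1) * / m - 1 = - (1 / m) by field; lra.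
  by rewrite e in h1; rewrite /L /L'; lra.
have e1 : exp (- t * L') = exp (- t * L) * exp (t * (L - L')).
  by rewrite -exp_plus; f_equal; ring.
have e2 : exp (t * (L - L')) >= 1 + t * (1 / m).
  have := exp_ineq1_le (t * (L - L')); have : t * (L - L') >= t * (1 / m) by nra.
  lra.
have e3 : exp (- (1 + t) * L) = exp (- t * L) * (1 / m).
  rewrite (_ : - (1 + t) * L = - t * L + - L) ?exp_plus ?exp_Ropp; last ring.
  by rewrite /L exp_ln; [field|]; lra.
have hE := exp_pos (- t * L).
have hm' : 0 < 1 / m by apply: Rdiv_lt_0_compat; lra.
apply (Rmult_le_reg_r t); first exact ht.
rewrite /Rdiv Rmult_assoc Rinv_l; last lra.
by rewrite e1 e3; nra.
Qed.

Lemma p_series_summable (sigma : R) : 1 < sigma ->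
  ex_series (fun n => exp (- sigma * ln (INR n.+1))).
Proof.
move=> hs; set t := sigma - 1; have ht : 0 < t by rewrite /t; lra.
set b := fun n => exp (- sigma * ln (INR n.+1)).
have b_nonneg : forall n, 0 <= b n by move=> n; apply: Rlt_le; apply: exp_pos.
have bound : forall N, sum_n b N <= 1 + (1 - exp (- t * ln (INR N.+1))) / t.
  elim=> [|N IH].
    rewrite sum_O /b (_ : INR 1 = 1) // ln_1 !Rmult_0_r exp_0.
    by rewrite (_ : (1 - 1) / t = 0); [lra | field; lra].
  have hb := p_series_term_bound t (INR N.+2) ht.
  rewrite (_ : - (1 + t) = - sigma) in hb; last by rewrite /t; ring.
  rewrite (_ : INR N.+2 - 1 = INR N.+1) in hb; last by rewrite !S_INR; ring.
  have h2 : 1 < INR N.+2 by rewrite !S_INR; have := pos_INR N; lra.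
  rewrite sum_Sn; apply: Rle_trans (Rplus_le_compat _ _ _ _ IH (hb h2)) _.
  by apply: Req_le; field; lra.
have [l hl] : ex_finite_lim_seq (sum_n b).
  apply: (ex_finite_lim_seq_incr _ (1 + 1 / t)).
    by move=> n; rewrite sum_Sn /plus /=; have := b_nonneg n.+1; lra.
  move=> n; apply: Rle_trans (bound n) _.
  have := exp_pos (- t * ln (INR n.+1)); have := Rinv_0_lt_compat _ ht.
  by rewrite /Rdiv; nra.
by exists l.
Qed.

Lemma Cmod_pow_n (x : C) k : Cmod (pow_n x k) = Cmod x ^ k.
Proof.
elim: k => [|k IH] /=; first by rewrite /one /= Cmod_1.
by rewrite /mult /= Cmod_mult IH.
Qed.

Lemma geom_partial_sum (x : C) N :
  (sum_n (fun k => pow_n x k.+1) N * (1 - x))%C = (x - pow_n x N.+2)%C.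
Proof.
elim: N => [|N IH]; first by rewrite sum_O /= /mult /one /=; ring.
rewrite sum_Sn; change (plus ?a ?b) with (Cplus a b).
rewrite Cmult_plus_distr_r IH.
change (pow_n x N.+3) with (x * pow_n x N.+2)%C.
change (pow_n x N.+2) with (x * pow_n x N.+1)%C.
ring.
Qed.

Lemma is_series_geomC (x : C) : Cmod x < 1 ->
  is_series (fun k => pow_n x k.+1) (x / (1 - x))%C.
Proof.
move=> hx.
have h1 : (1 - x)%C <> 0%C.
  move=> h; have e : x = 1%C by rewrite -[x]Cplus_0_l -h; ring.
  by rewrite e Cmod_1 in hx; lra.
have hm : 0 < Cmod (1 - x) by apply/Cmod_gt_0.
apply/filterlim_locally_ball_norm => eps.
have hg := is_lim_seq_geom (Cmod x).
rewrite Rabs_pos_eq in hg; last exact: Cmod_ge_0.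
have he : 0 < eps * Cmod (1 - x) by apply: Rmult_lt_0_compat => //; apply: cond_pos.
have [N HN] := proj2 (is_lim_seq_spec _ _) (hg hx) (mkposreal _ he).
exists N => n hn; rewrite /ball_norm.
change (Cmod (sum_n (fun k => pow_n x k.+1) n - x / (1 - x))%C < eps).
have -> : (sum_n (fun k => pow_n x k.+1) n - x / (1 - x))%C = (- pow_n x n.+2 / (1 - x))%C.
  rewrite -[sum_n _ _]Cmult_1_r -(Cinv_r (1 - x)) // Cmult_assoc geom_partial_sum.
  by field.
rewrite Cmod_div // Cmod_opp Cmod_pow_n.
have h : Cmod x ^ n.+2 < eps * Cmod (1 - x).
  have := HN n.+2 ltac:(lia).
  by rewrite Rminus_0_r Rabs_pos_eq //; apply: pow_le; apply: Cmod_ge_0.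
apply: (Rmult_lt_reg_r (Cmod (1 - x))) => //.
by rewrite /Rdiv Rmult_assoc Rinv_l; lra.
Qed.

Lemma is_series_geomR (y c : R) : 0 <= y < 1 ->
  is_series (fun k => c * y ^ k.+1) (c * (y / (1 - y))).
Proof.
move=> hy.
have hg := is_series_geom y ltac:(rewrite Rabs_pos_eq; lra).
have := is_series_scal_l (c * y) _ _ hg; rewrite /scal /= /mult /= => h.
rewrite (_ : c * (y / (1 - y)) = c * y * / (1 - y)); last by rewrite /Rdiv; ring.
by apply: is_series_ext h => k /=; ring.
Qed.

(* Arithmetic identities, with indices shifted by one: the index [i] stands
   for the positive integer [i+1].  Dirichlet convolution is the fibre sum
   for the key [(i+1)(j+1) = n+1]. *)
Definition mul_key (i j : nat) : nat := (i.+1 * j.+1).-1.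

Lemma mul_key_eq i j n : (mul_key i j == n) = (i.+1 * j.+1 == n.+1)%nat.
Proof.
rewrite /mul_key; have : (0 < i.+1 * j.+1)%nat by rewrite muln_gt0.
by case: (i.+1 * j.+1)%nat.
Qed.

Lemma mul_keyK i j : (mul_key i j).+1 = (i.+1 * j.+1)%nat.
Proof. by rewrite /mul_key prednK // muln_gt0. Qed.

Lemma key_bounded_mul_key {G : AbelianMonoid} (f : nat -> nat -> G) :
  key_bounded mul_key f.
Proof. by move=> i j; rewrite /mul_key; nia. Qed.

Lemma fiber_sum_mul_key_swap (f : nat -> nat -> R) n :
  fiber_sum mul_key (fun i j => f j i) n = fiber_sum mul_key f n.
Proof.
rewrite /fiber_sum sum_n_switch; apply: sum_n_ext => i; apply: sum_n_ext => j.
by rewrite !mul_key_eq mulnC.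
Qed.

Lemma sum_cofactor (x : R) i n :
  sum_n (fun j => if mul_key i j == n then x else 0) n = if (i.+1 %| n.+1)%nat then x else 0.
Proof.
case: ifP => hd; last first.
  apply: sum_n_zero => j _; case: ifP => // /eqP h; exfalso.
  by move: h => /(f_equal S); rewrite mul_keyK => h; move/negP: hd; apply; rewrite -h dvdn_mulr.
move/dvdnP: hd => [e he]; have e0 : (0 < e)%nat by case: e he.
rewrite (sum_n_ext _ (fun j => if j == e.-1 then x else zero)); last first.
  by move=> j; rewrite mul_key_eq he [(e * _)%nat]mulnC eqn_pmul2l // -(prednK e0).
rewrite sum_delta_at; case: ifP => // /negbT; rewrite -ltnNge => hlt; exfalso.
have : (e <= n.+1)%nat by rewrite he leq_pmulr.
lia.
Qed.

Lemma count_iota (P : nat -> bool) n :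
  INR (count P (iota 1 n.+1)) = sum_n (fun i => if P i.+1 then 1 else 0) n.
Proof.
elim: n => [|n IH]; first by rewrite sum_O /=; case: (P 1%nat).
have -> : iota 1 n.+2 = iota 1 n.+1 ++ [:: n.+2] by rewrite -[n.+2]addn1 iotaD add1n addn1.
rewrite sum_Sn -IH count_cat plus_INR /=.
by case: (P n.+2); rewrite /plus /=; lra.
Qed.

Lemma tau_count n : INR (tau n.+1) = sum_n (fun i => if (i.+1 %| n.+1)%nat then 1 else 0) n.
Proof.
rewrite -(count_iota (fun d => d %| n.+1)%nat) /tau -size_filter.
f_equal; apply: perm_size; apply: uniq_perm.
- exact: divisors_uniq.
- by apply: filter_uniq; apply: iota_uniq.
move=> d; rewrite -dvdn_divisors // mem_filter mem_iota.
case hd: (d %| n.+1)%nat => //=.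
have := dvdn_leq (ltn0Sn n) hd.
have : (0 < d)%nat by case: d hd => //; rewrite dvd0n.
lia.
Qed.

Lemma fiber_sum_one n : fiber_sum mul_key (fun _ _ => 1) n = INR (tau n.+1).
Proof. by rewrite tau_count; apply: sum_n_ext => i; apply: sum_cofactor. Qed.

(* The logarithmic derivative [L(N) = delta(N)/N = sum_(p^a || N) a/p]. *)
Definition logder (N : nat) : R :=
  foldr (fun p acc => INR (logn p N) / INR p + acc) 0 (primes N).

Lemma foldr_sum (s : seq nat) (g : nat -> R) M :
  uniq s -> (forall x, x \in s -> (x <= M)%nat) ->
  foldr (fun p acc => g p + acc) 0 s = sum_n (fun q => if q \in s then g q else 0) M.
Proof.
elim: s => [|x s IH] /=; first by move=> _ _; rewrite sum_n_zero.
move=> /andP [hx hu] hM.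
rewrite IH //; last by move=> y hy; apply: hM; rewrite inE hy orbT.
have -> : sum_n (fun q => if q \in x :: s then g q else 0) M =
    plus (sum_n (fun q => if q == x then g q else zero) M)
         (sum_n (fun q => if q \in s then g q else 0) M).
  rewrite -sum_n_plus; apply: sum_n_ext => q; rewrite inE.
  case: eqP => [->|_] /=; last by rewrite /plus /zero /=; ring.
  by rewrite (negbTE hx) /plus /zero /=; ring.
by rewrite sum_delta_at hM ?inE ?eqxx.
Qed.

(* [L(N)] as a sum over all [q <= M]; the terms with [q] not a prime
   factor of [N] vanish since then [logn q N = 0]. *)
Lemma logder_sum N M : (0 < N)%nat -> (N <= M)%nat ->
  logder N = sum_n (fun q => INR (logn q N) / INR q) M.
Proof.
move=> hN hM; rewrite /logder (foldr_sum _ (fun p => INR (logn p N) / INR p) M).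
- apply: sum_n_ext => q; case: ifP => // h.
  by rewrite lognE -mem_primes h /= /Rdiv; ring.
- exact: primes_uniq.
- move=> x; rewrite mem_primes => /and3P [_ _ hd].
  by apply: leq_trans hM; apply: dvdn_leq.
Qed.

(* [L] is additive; this is the Leibniz rule for [delta]. *)
Lemma logder_mul a b : (0 < a)%nat -> (0 < b)%nat -> logder (a * b) = logder a + logder b.
Proof.
move=> ha hb; have hab : (0 < a * b)%nat by rewrite muln_gt0 ha hb.
rewrite (logder_sum _ (a * b)) // (logder_sum a (a * b)) ?leq_pmulr //.
rewrite (logder_sum b (a * b)) ?leq_pmull //.
rewrite [RHS](_ : forall u v : R, u + v = plus u v) // -sum_n_plus.
by apply: sum_n_ext => q; rewrite lognM // plus_INR /plus /= /Rdiv; ring.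
Qed.

(* [tau L = 2 (L * 1)]: split [L(ab) = L(a) + L(b)] and use the symmetry
   of the convolution. *)
Lemma tau_logder n :
  INR (tau n.+1) * logder n.+1 = 2 * fiber_sum mul_key (fun i j => logder i.+1) n.
Proof.
rewrite -fiber_sum_one Rmult_comm.
rewrite (fiber_sum_morph mul_key (Rmult (logder n.+1))); last 2 first.
- by rewrite /zero /=; ring.
- by move=> x y; rewrite /plus /=; ring.
rewrite (fiber_sum_ext _ _ (fun i j => plus (logder i.+1) (logder j.+1))); last first.
  move=> i j h; have e : n.+1 = (i.+1 * j.+1)%nat by rewrite -h mul_keyK.
  by rewrite e logder_mul // /plus /=; ring.
rewrite fiber_sum_plus (fiber_sum_mul_key_swap (fun i j => logder i.+1)) /plus /=; ring.
Qed.

(* The function [Lambda(p^k) = 1/p] (p prime, k >= 1), zero elsewhere: it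
   is the fibre sum of [1/p] along the key [(p+1)^(k+1) = n+1]. *)
Definition pow_key (p k : nat) : nat := (p.+1 ^ k.+1).-1.

Definition prime_inv (p k : nat) : R := if prime p.+1 then / INR p.+1 else 0.

Definition Lambda (n : nat) : R := fiber_sum pow_key prime_inv n.

Lemma pow_keyK p k : (pow_key p k).+1 = (p.+1 ^ k.+1)%nat.
Proof. by rewrite /pow_key prednK // expn_gt0. Qed.

Lemma key_bounded_pow_key {G : AbelianMonoid} (f : nat -> nat -> G) :
  (forall p k, ~~ prime p.+1 -> f p k = zero) -> key_bounded pow_key f.
Proof.
move=> H p k hpk; case hp: (prime p.+1); last by apply: H; rewrite hp.
have h1 : (1 < p.+1)%nat by apply: prime_gt1.
have h2 := ltn_expl k.+1 h1.
have h3 : (p.+1 ^ 1 <= p.+1 ^ k.+1)%nat by rewrite leq_pexp2l.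
have := pow_keyK p k; rewrite expn1 in h3; lia.
Qed.

Lemma logn_lt p m : prime p -> (0 < m)%nat -> (logn p m < m)%nat.
Proof.
move=> hp hm.
have h1 : (p ^ logn p m <= m)%nat by apply: dvdn_leq => //; rewrite pfactor_dvdn.
by have := ltn_expl (logn p m) (prime_gt1 hp); lia.
Qed.

Lemma sum_indicator_lt (c : R) L n : (L <= n.+1)%nat ->
  sum_n (fun k => if (k < L)%nat then c else 0) n = c * INR L.
Proof.
move=> hL; suff -> : sum_n (fun k => if (k < L)%nat then c else 0) n = c * INR (minn L n.+1).
  by rewrite (_ : minn L n.+1 = L) //; lia.
elim: n {hL} => [|n IH]; first by rewrite sum_O; case: L => [|L] /=; ring.
rewrite sum_Sn IH /plus /=; case: ifP => h.
  by rewrite (_ : minn L n.+2 = (minn L n.+1).+1) ?S_INR; [ring | lia].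
by rewrite (_ : minn L n.+2 = minn L n.+1); [ring | lia].
Qed.

(* A prime [p] contributes [1/p] once for each prime power [p^(k+1)]
   dividing [n+1], that is [logn p (n+1)] times. *)
Lemma prime_power_divisors (c : R) p n : prime p.+1 ->
  sum_n (fun k => if (p.+1 ^ k.+1 %| n.+1)%nat then c else 0) n = c * INR (logn p.+1 n.+1).
Proof.
move=> hp; have hlt := logn_lt _ _ hp (ltn0Sn n).
rewrite -(sum_indicator_lt c _ n); last lia.
by apply: sum_n_ext => k; rewrite pfactor_dvdn.
Qed.

Lemma Lambda_convolution n : fiber_sum mul_key (fun i j => Lambda i) n = logder n.+1.
Proof.
rewrite /fiber_sum (sum_n_ext _ (fun i => if (i.+1 %| n.+1)%nat then Lambda i else 0)); last first.
  by move=> i; rewrite sum_cofactor.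
rewrite (sum_n_ext_loc _ (fun i => sum_n (fun p => sum_n (fun k =>
    if pow_key p k == i then (if (i.+1 %| n.+1)%nat then prime_inv p k else 0) else zero) n) n)); last first.
  move=> i /leP hi; rewrite /Lambda (fiber_sum_widen _ _ i n) //; last first.
    by apply: key_bounded_pow_key => p k hp; rewrite /prime_inv (negbTE hp).
  case: ifP => _ //; symmetry.
  by apply: sum_n_zero => p _; apply: sum_n_zero => k _; case: ifP.
rewrite sum_n_switch (sum_n_ext _ (fun p => if prime p.+1 then INR (logn p.+1 n.+1) / INR p.+1 else 0)).
  rewrite (logder_sum n.+1 n.+1) // sum_n_shift.
  rewrite /= /Rdiv Rmult_0_l plus_zero_l; apply: sum_n_ext => p.
  by case: ifP => // h; rewrite lognE h /=; ring.
move=> p; rewrite sum_n_switch.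
rewrite (sum_n_ext _ (fun k => if (p.+1 ^ k.+1 %| n.+1)%nat then prime_inv p k else 0)); last first.
  move=> k; rewrite (sum_n_ext _ (fun i => if pow_key p k == i
      then (if ((pow_key p k).+1 %| n.+1)%nat then prime_inv p k else 0) else zero)).
    rewrite sum_delta pow_keyK; case: ifP => // hk; case: ifP => // hd; exfalso.
    move/negbT: hk; rewrite -ltnNge => hk; have := dvdn_leq (ltn0Sn n) hd.
    by rewrite -pow_keyK; lia.
  by move=> i; case: eqP => [->|].
rewrite /prime_inv; case hp: (prime p.+1); last by rewrite sum_n_zero // => k _; case: ifP.
by rewrite prime_power_divisors // /Rdiv Rmult_comm.
Qed.

Definition zeta_term (w : C) (n : nat) : C := Cinv (npow n.+1 w).

Lemma zeta_term_npow w n : zeta_term w n = npow n.+1 (- w)%C.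
Proof. by rewrite /zeta_term npow_inv. Qed.

Lemma Cmod_zeta_term w n : Cmod (zeta_term w n) = exp (- Re w * ln (INR n.+1)).
Proof. by rewrite zeta_term_npow Cmod_npow. Qed.

Lemma zeta_abs_summable w : 1 < Re w -> ex_series (fun n => Cmod (zeta_term w n)).
Proof.
move=> hw; apply: (ex_series_ext (fun n => exp (- Re w * ln (INR n.+1)))).
  by move=> n; rewrite Cmod_zeta_term.
exact: p_series_summable.
Qed.

Lemma zeta_term_mul w i j : (zeta_term w i * zeta_term w j)%C = zeta_term w (mul_key i j).
Proof. by rewrite !zeta_term_npow mul_keyK npow_mul. Qed.

Lemma is_series_uniqueC (a : nat -> C) (x y : C) : is_series a x -> is_series a y -> x = y.
Proof. apply filterlim_locally_unique. Qed.

Lemma dirichlet_product (A B : nat -> C) (a b : C) :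
  is_series A a -> is_series B b ->
  ex_series (fun n => Cmod (A n)) -> ex_series (fun n => Cmod (B n)) ->
  is_series (fiber_sum mul_key (fun i j => (A i * B j)%C)) (a * b)%C /\
  ex_series (fun n => Cmod (fiber_sum mul_key (fun i j => (A i * B j)%C) n)).
Proof.
move=> hA hB [la hla] [lb hlb].
have habs : double_summable (fun i j => Cmod (A i * B j)%C).
  have row : forall i, is_series (fun j => Cmod (A i * B j)%C) (Cmod (A i) * lb).
    move=> i; apply: (is_series_ext (fun j => scal (Cmod (A i)) (Cmod (B j)))).
      by move=> j; rewrite Cmod_mult.
    exact: is_series_scal_l.
  split=> [i|]; first by eexists; apply: row.
  apply: (ex_series_ext (fun i => Cmod (A i) * lb)).
    by move=> i; rewrite (is_series_unique _ _ (row i)).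
  by apply: ex_series_scal_r; exists la.
have hrow : forall i, is_series (fun j => (A i * B j)%C) (A i * b)%C.
  by move=> i; apply: (is_series_scal (A i) B b).
have hcol : is_series (fun i => (A i * b)%C) (a * b)%C.
  apply: (is_series_ext (fun i => scal b (A i))); first by move=> i; rewrite /scal /= /mult /= Cmult_comm.
  by rewrite (_ : (a * b)%C = scal b a); [apply: is_series_scal | rewrite /scal /= /mult /= Cmult_comm].
have [S [hS hfib]] := fiber_series_complex _ _ _ (key_bounded_mul_key _) habs hrow.
rewrite (is_series_uniqueC _ _ _ hcol hS).
by split=> //; apply: fiber_series_abs => //; apply: key_bounded_mul_key.
Qed.

Lemma dirichlet_mul_zeta (w : C) (c : nat -> R) (a Z : C) :
  1 < Re w -> is_series (zeta_term w) Z ->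
  is_series (fun n => (RtoC (c n) * zeta_term w n)%C) a ->
  ex_series (fun n => Cmod (RtoC (c n) * zeta_term w n)%C) ->
  is_series (fun n => (RtoC (fiber_sum mul_key (fun i j => c i) n) * zeta_term w n)%C) (a * Z)%C /\
  ex_series (fun n => Cmod (RtoC (fiber_sum mul_key (fun i j => c i) n) * zeta_term w n)%C).
Proof.
move=> hw hZ ha haabs.
have [hP hPabs] := dirichlet_product _ _ _ _ ha hZ haabs (zeta_abs_summable w hw).
have e : forall n, fiber_sum mul_key (fun i j => (RtoC (c i) * zeta_term w i * zeta_term w j)%C) n =
    (RtoC (fiber_sum mul_key (fun i j => c i) n) * zeta_term w n)%C.
  move=> n; rewrite (fiber_sum_morph mul_key (fun x => RtoC x * zeta_term w n)%C); last 2 first.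
  - by rewrite /zero /=; ring.
  - by move=> x y; rewrite /plus /= RtoC_plus; ring.
  apply: fiber_sum_ext => i j <-.
  by rewrite -Cmult_assoc zeta_term_mul.
split; first by apply: is_series_ext hP.
by apply: ex_series_ext hPabs => n; rewrite e.
Qed.

(* [F(w) = sum_p 1/(p^(w+1) - p)] expands, by the geometric series in
   [p^-w], into the double series [sum_p sum_(k>=1) p^(-1-kw)], whose fibre
   sums along [pow_key] are the terms of the Dirichlet series of [Lambda]. *)
Definition F_family (w : C) (p k : nat) : C :=
  if prime p.+1 then (RtoC (/ INR p.+1) * pow_n (npow p.+1 (- w)%C) k.+1)%C else 0%C.

Lemma Cmod_npow_neg_bound w p : 1 < Re w -> (1 < p)%nat ->
  Cmod (npow p (- w)%C) = exp (- Re w * ln (INR p)) /\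
  0 < exp (- Re w * ln (INR p)) <= / INR p /\ / INR p <= 1 / 2.
Proof.
move=> hw hp.
have hP : 2 <= INR p by rewrite (_ : 2 = INR 2) //; apply: le_INR; apply/leP.
have hl : 0 < ln (INR p) by rewrite -ln_1; apply: ln_increasing; lra.
split; first by rewrite Cmod_npow.
split; last by rewrite /Rdiv Rmult_1_l; apply: Rinv_le_contravar; lra.
split; first exact: exp_pos.
rewrite -[/ INR p]exp_ln; last by apply: Rinv_0_lt_compat; lra.
by rewrite ln_Rinv; [apply: Rlt_le; apply: exp_increasing; nra | lra].
Qed.

Lemma F_family_row w p : 1 < Re w -> is_series (F_family w p) (F_term w p.+1).
Proof.
move=> hw; rewrite /F_family /F_term; case hp: (prime p.+1); last exact: is_series_zero.
have [hm [[_ hy] hh]] := Cmod_npow_neg_bound w p.+1 hw (prime_gt1 hp).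
set x := npow p.+1 (- w)%C.
have hx : Cmod x < 1 by rewrite /x hm; lra.
suff -> : Cinv (Cminus (npow p.+1 (Cplus w (RtoC 1))) (RtoC (INR p.+1))) =
    (RtoC (/ INR p.+1) * (x / (1 - x)))%C.
  exact: (is_series_scal (RtoC (/ INR p.+1)) _ _ (is_series_geomC x hx)).
have hxe : x = Cinv (npow p.+1 w) by rewrite /x npow_inv.
have hP := npow_neq0 p.+1 w.
have hP1 : (npow p.+1 w - 1)%C <> 0%C.
  move=> e; have e1 : npow p.+1 w = 1%C by apply/Ceq_minus.
  by rewrite hxe e1 (_ : Cinv 1 = 1%C) ?Cmod_1 in hx; [lra | field].
have hpR : INR p.+1 <> 0 by apply: not_0_INR.
have hpC : RtoC (INR p.+1) <> 0%C by move=> e; apply: hpR; apply: RtoC_inj.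
rewrite npow_add npow_1 // RtoC_inv // hxe.
field; repeat split => //.
rewrite (_ : (npow p.+1 w * INR p.+1 - INR p.+1)%C = ((npow p.+1 w - 1) * INR p.+1)%C); last ring.
exact: Cmult_neq_0.
Qed.

Lemma F_family_abs_summable w : 1 < Re w -> double_summable (fun p k => Cmod (F_family w p k)).
Proof.
move=> hw.
set y := fun p => exp (- Re w * ln (INR p.+1)).
set r := fun p => if prime p.+1 then / INR p.+1 * (y p / (1 - y p)) else 0.
have hrow : forall p, is_series (fun k => Cmod (F_family w p k)) (r p).
  move=> p; rewrite /r /F_family; case hp: (prime p.+1); last first.
    by apply: (is_series_ext (fun _ => 0)); [move=> k; rewrite Cmod_0 | exact: is_series_zero].
  have [hm [hy hh]] := Cmod_npow_neg_bound w p.+1 hw (prime_gt1 hp).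
  apply: (is_series_ext (fun k => / INR p.+1 * y p ^ k.+1)); last by apply: is_series_geomR; rewrite /y; lra.
  move=> k; rewrite Cmod_mult Cmod_R Cmod_pow_n hm Rabs_pos_eq //.
  by apply: Rlt_le; apply: Rinv_0_lt_compat; apply: lt_0_INR; lia.
split=> [p|]; first by eexists; apply: hrow.
apply: (ex_series_le _ (fun p => scal 2 (y p))); last first.
  by apply: ex_series_scal_l; apply: p_series_summable.
move=> p; rewrite (is_series_unique _ _ (hrow p)) /norm /= /abs /= /scal /= /mult /= /r.
have hy0 : 0 < y p by apply: exp_pos.
case hp: (prime p.+1); last by rewrite Rabs_R0; lra.
have [_ [hy hh]] := Cmod_npow_neg_bound w p.+1 hw (prime_gt1 hp).
have hp0 : 0 < / INR p.+1 by apply: Rinv_0_lt_compat; apply: lt_0_INR; lia.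
have hq : 0 <= y p / (1 - y p) <= 2 * y p.
  split; first by apply: Rdiv_le_0_compat; rewrite /y; lra.
  apply: (Rmult_le_reg_r (1 - y p)); first by rewrite /y; lra.
  by rewrite /Rdiv Rmult_assoc Rinv_l; rewrite /y in hy *; nra.
by rewrite Rabs_pos_eq; rewrite /y in hy hq *; nra.
Qed.

Lemma F_family_fiber w n : fiber_sum pow_key (F_family w) n = (RtoC (Lambda n) * zeta_term w n)%C.
Proof.
rewrite /Lambda (fiber_sum_morph pow_key (fun x => RtoC x * zeta_term w n)%C); last 2 first.
- by rewrite /zero /=; ring.
- by move=> x y; rewrite /plus /= RtoC_plus; ring.
apply: fiber_sum_ext => p k <-.
rewrite /F_family /prime_inv; case: ifP => hp; last by rewrite Cmult_0_l.
by rewrite zeta_term_npow pow_keyK npow_pow.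
Qed.

Lemma Lambda_dirichlet w : 1 < Re w ->
  exists Fv, is_F w Fv /\
    is_series (fun n => (RtoC (Lambda n) * zeta_term w n)%C) Fv /\
    ex_series (fun n => Cmod (RtoC (Lambda n) * zeta_term w n)%C).
Proof.
move=> hw.
have hk : key_bounded pow_key (F_family w).
  by apply: key_bounded_pow_key => p k hp; rewrite /F_family (negbTE hp).
have habs := F_family_abs_summable w hw.
have [Fv [hrows hfib]] := fiber_series_complex _ _ _ hk habs (fun p => F_family_row w p hw).
exists Fv; split; last split.
- apply: is_series_decr_1; rewrite /F_term /= opp_zero plus_zero_r; exact: hrows.
- by apply: is_series_ext hfib => n; rewrite F_family_fiber.
- by apply: ex_series_ext (fiber_series_abs _ _ hk habs) => n; rewrite F_family_fiber.
Qed.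

(* The summand of the theorem: [tau(n) delta(n) / n^s = 2 (L * 1)(n) n^-(s-1)]
   since [delta(n) = n L(n)] and [tau L = 2 (L * 1)]. *)
Lemma tau_delta_term s n :
  Cdiv (RtoC (INR (tau n.+1) * adelta n.+1)) (npow n.+1 s) =
  (RtoC 2 * (RtoC (fiber_sum mul_key (fun i j => logder i.+1) n) * zeta_term (s - 1) n))%C.
Proof.
have hN : RtoC (INR n.+1) <> 0%C by move=> e; apply: (not_0_INR n.+1) => //; apply: RtoC_inj.
have hnp := npow_neq0 n.+1 (s - 1)%C.
have -> : npow n.+1 s = (npow n.+1 (s - 1) * RtoC (INR n.+1))%C.
  by rewrite -npow_1 // -npow_add; congr npow; ring.
rewrite (_ : adelta n.+1 = INR n.+1 * logder n.+1) //.
rewrite (_ : INR (tau n.+1) * (INR n.+1 * logder n.+1) = INR n.+1 * (INR (tau n.+1) * logder n.+1)); last ring.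
rewrite tau_logder /zeta_term !RtoC_mult.
by field.
Qed.

Theorem mainTheorem18 (s : C) (hs : 2 < Re s) :
  exists Z Fv : C,
    is_zeta (Cminus s (RtoC 1)) Z /\
    is_F (Cminus s (RtoC 1)) Fv /\
    is_series
      (fun n : nat =>
         Cdiv (RtoC (INR (tau n.+1) * adelta n.+1)) (npow n.+1 s))
      (Cmult (RtoC 2) (Cmult (Cmult Z Z) Fv)).
Proof.
set w := Cminus s (RtoC 1).
have hw : 1 < Re w by change (1 < Re s + - 1); lra.
have [Z hZ] : ex_series (zeta_term w).
  by apply: ex_series_le (zeta_abs_summable w hw) => n; apply: Rle_refl.
have [Fv [hF [hLambda hLambda_abs]]] := Lambda_dirichlet w hw.
(* [L = Lambda * 1] has Dirichlet series [F(w) zeta(w)] ... *)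
have [hL hL_abs] := dirichlet_mul_zeta _ _ _ _ hw hZ hLambda hLambda_abs.
have hL' : is_series (fun n => RtoC (logder n.+1) * zeta_term w n)%C (Fv * Z)%C.
  by apply: is_series_ext hL => n; rewrite Lambda_convolution.
have hL_abs' : ex_series (fun n => Cmod (RtoC (logder n.+1) * zeta_term w n)%C).
  by apply: ex_series_ext hL_abs => n; rewrite Lambda_convolution.
(* ... and [tau L = 2 (L * 1)] has Dirichlet series [2 F(w) zeta(w)^2]. *)
have [hTL _] := dirichlet_mul_zeta w (fun n => logder n.+1) _ _ hw hZ hL' hL_abs'.
exists Z, Fv; do 2 (split => //).
rewrite (_ : (RtoC 2 * (Z * Z * Fv))%C = scal (RtoC 2) (Fv * Z * Z)%C); last first.
  by rewrite /scal /= /mult /=; ring.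
apply: is_series_ext (is_series_scal _ _ _ hTL) => n.
by rewrite tau_delta_term.
Qed.
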